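(* Let $R$ be a ring. Every t.i.b.s. right $R$-module is subinjective extension-reflecting.
   Context: For right $R$-modules $X,Y$, $X\in \underline{\mathfrak{In}}^{-1}(Y)$ means: for every module $C$ containing $X$ as a submodule, every homomorphism $X\to Y$ extends to $C\to Y$. A module $M$ is a t.i.b.s. module (test module for injectivity by subinjectivity) if $M\in \underline{\mathfrak{In}}^{-1}(N)$ implies that $N$ is injective. $M$ is subinjective extension-reflecting if for every short exact sequence $0\to A\to B\to C\to 0$, $M\in \underline{\mathfrak{In}}^{-1}(A)\cap \underline{\mathfrak{In}}^{-1}(C)$ implies $M\in \underline{\mathfrak{In}}^{-1}(B)$. *)

From HB Require Import structures.
From mathcomp Require Import all_boot all_algebra.
Set Implicit Arguments. Unset Strict Implicit. Unset Printing Implicit Defensive.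
Import GRing.Theory.
Local Open Scope ring_scope.

(* Right R-modules are modelled as left modules over the converse ring R^c. *)
Notation rmodType R := (lmodType (GRing.converse R)).

Section Defs.
Variable R : pzRingType.

Definition is_hom (X Y : rmodType R) (f : X -> Y) : Prop :=
  forall (a : GRing.converse R) (x y : X), f (a *: x + y) = a *: f x + f y.

(* X \in In^{-1}(Y): for every module C containing X as a submodule
   (i.e. every monomorphism i : X -> C), every hom X -> Y extends to C. *)
Definition subinj (X Y : rmodType R) : Prop :=
  forall (C : rmodType R) (i : X -> C), is_hom i -> injective i ->
  forall f : X -> Y, is_hom f ->
  exists g : C -> Y, is_hom g /\ forall x, g (i x) = f x.

Definition injective_module (N : rmodType R) : Prop :=
  forall (A B : rmodType R) (i : A -> B), is_hom i -> injective i ->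
  forall f : A -> N, is_hom f ->
  exists g : B -> N, is_hom g /\ forall a, g (i a) = f a.

Definition tibs (M : rmodType R) : Prop :=
  forall N : rmodType R, subinj M N -> injective_module N.

Definition short_exact (A B C : rmodType R) (f : A -> B) (g : B -> C) : Prop :=
  [/\ is_hom f, is_hom g, injective f, (forall c, exists b, g b = c) &
      (forall b, g b = 0 <-> exists a, f a = b)].

Definition subinj_ext_reflecting (M : rmodType R) : Prop :=
  forall (A B C : rmodType R) (f : A -> B) (g : B -> C), short_exact f g ->
  subinj M A -> subinj M C -> subinj M B.
End Defs.

(* An injective submodule is a direct summand, so the tibs hypothesis, which
   makes A injective, splits the sequence: B is the internal direct sum of
   f(A) and a copy of C. Subinjectivity relative to a module is inherited by
   such a sum, by extending the two components of a map M -> B separately. *)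
From mathcomp Require Import all_boot all_algebra.
From Stdlib Require Import IndefiniteDescription.
Import GRing.Theory.
Local Open Scope ring_scope.

Section Hom.
Context {R : pzRingType} {X Y : rmodType R} {f : X -> Y}.
Hypothesis hf : is_hom f.

Lemma homD x y : f (x + y) = f x + f y.
Proof. by have := hf 1 x y; rewrite !scale1r. Qed.

Lemma hom0 : f 0 = 0.
Proof. by apply: (@addrI _ (f 0)); rewrite addr0 -homD addr0. Qed.

Lemma homZ a x : f (a *: x) = a *: f x.
Proof. by have := hf a x 0; rewrite hom0 !addr0. Qed.

Lemma homN x : f (- x) = - f x.
Proof. by rewrite -scaleN1r homZ scaleN1r. Qed.

Lemma homB x y : f (x - y) = f x - f y.
Proof. by rewrite homD homN. Qed.

End Hom.

Lemma hom_comp {R : pzRingType} {X Y Z : rmodType R} {h : Y -> Z} {k : X -> Y} :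
  is_hom h -> is_hom k -> is_hom (h \o k).
Proof. by move=> hh hk a x y; rewrite /= hk hh. Qed.

Lemma injective_module_retraction {R : pzRingType} {A B : rmodType R} {f : A -> B} :
  injective_module A -> is_hom f -> injective f ->
  exists p : B -> A, is_hom p /\ cancel f p.
Proof. by move=> injA hf injf; apply: injA hf injf id _. Qed.

Lemma short_exact_section {R : pzRingType} {A B C : rmodType R}
    {f : A -> B} {g : B -> C} {p : B -> A} :
  short_exact f g -> is_hom p -> cancel f p ->
  exists s : C -> B, is_hom s /\ forall b, f (p b) + s (g b) = b.
Proof.
move=> [hf hg _ g_surj exact_fg] hp fK.
have [sec secK] : exists sec : C -> B, cancel sec g.
  exists (fun c => proj1_sig (constructive_indefinite_description _ (g_surj c))).
  by move=> c; case: constructive_indefinite_description.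
pose s c := sec c - f (p (sec c)).
(* [b - f (p b)] only depends on [g b], as it vanishes on [ker g = im f]. *)
have sE b : s (g b) = b - f (p b).
  have [a fa] : exists a, f a = sec (g b) - b by apply/exact_fg; rewrite homB // secK subrr.
  rewrite /s (_ : sec (g b) = f a + b); last by rewrite fa subrK.
  by rewrite (homD hp) fK (homD hf) opprD addrACA subrr add0r.
exists s; split; last by move=> b; rewrite sE addrC subrK.
move=> a c c'; have [b <-] := g_surj c; have [b' <-] := g_surj c'.
rewrite -(homZ hg) -(homD hg) !sE (homD hp) (homZ hp) (homD hf) (homZ hf).
by rewrite scalerBr opprD addrACA.
Qed.

Lemma subinj_retract_sum {R : pzRingType} {M A B C : rmodType R}
    {f : A -> B} {p : B -> A} {s : C -> B} {q : B -> C} :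
  is_hom f -> is_hom p -> is_hom s -> is_hom q ->
  (forall b, f (p b) + s (q b) = b) ->
  subinj M A -> subinj M C -> subinj M B.
Proof.
move=> hf hp hs hq idB sA sC D i hi inji h hh.
have [kA [hkA ekA]] := sA D i hi inji _ (hom_comp hp hh).
have [kC [hkC ekC]] := sC D i hi inji _ (hom_comp hq hh).
exists (fun x => f (kA x) + s (kC x)); split.
  by move=> a x y; rewrite hkA hkC hf hs scalerDr addrACA.
by move=> x; rewrite ekA ekC idB.
Qed.

Theorem mainTheorem17 (R : pzRingType) (M : rmodType R) :
  tibs M -> subinj_ext_reflecting M.
Proof.
move=> tibsM A B C f g ex sA sC.
have [hf hg injf _ _] := ex.
have [p [hp fK]] := injective_module_retraction (tibsM A sA) hf injf.
have [s [hs idB]] := short_exact_section ex hp fK.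
exact: subinj_retract_sum hf hp hs hg idB sA sC.
Qed.
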